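(* Let $\mathcal{D}$ be a symmetric operator on a Hilbert space $\mathcal{H}$, and suppose there exists an adequate approximate identity for $\mathcal{D}$. Then $\mathcal{D}$ is essentially self-adjoint.
   Context: A sequential approximate identity on a Hilbert $B$-module $E$ (here $B=\mathbb{C}$, $E=\mathcal{H}$) is a sequence of self-adjoint operators $\phi_k\in\mathrm{End}_B(E)$, $k\in\mathbb{N}$, converging strongly to the identity on $E$. For a symmetric operator $\mathcal{D}$ on $E$, an adequate approximate identity for $\mathcal{D}$ is a sequential approximate identity $\{\phi_k\}$ such that $\phi_k\cdot\mathrm{Dom}\,\mathcal{D}^*\subset\mathrm{Dom}\,\bar{\mathcal{D}}$, $[\bar{\mathcal{D}},\phi_k]$ is bounded on $\mathrm{Dom}\,\mathcal{D}$ for all $k$, and $\sup_k\|\overline{[\bar{\mathcal{D}},\phi_k]}\|<\infty$. *)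

From Stdlib Require Import Reals.
Open Scope R_scope.

Record Cpx := mkC { re : R; im : R }.
Definition C0 : Cpx := mkC 0 0.
Definition C1 : Cpx := mkC 1 0.
Definition Cadd (a b : Cpx) : Cpx := mkC (re a + re b) (im a + im b).
Definition Cmul (a b : Cpx) : Cpx :=
  mkC (re a * re b - im a * im b) (re a * im b + im a * re b).
Definition Cconj (a : Cpx) : Cpx := mkC (re a) (- im a).

Record HilbertSpace := {
  carrier :> Type;
  hzero : carrier;
  hadd : carrier -> carrier -> carrier;
  hopp : carrier -> carrier;
  hscal : Cpx -> carrier -> carrier;
  hinner : carrier -> carrier -> Cpx;
  hadd_assoc : forall x y z, hadd x (hadd y z) = hadd (hadd x y) z;
  hadd_comm : forall x y, hadd x y = hadd y x;
  hadd_0 : forall x, hadd x hzero = x;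
  hadd_opp : forall x, hadd x (hopp x) = hzero;
  hscal_1 : forall x, hscal C1 x = x;
  hscal_mul : forall a b x, hscal (Cmul a b) x = hscal a (hscal b x);
  hscal_addl : forall a b x, hscal (Cadd a b) x = hadd (hscal a x) (hscal b x);
  hscal_addr : forall a x y, hscal a (hadd x y) = hadd (hscal a x) (hscal a y);
  hinner_addl : forall x y z, hinner (hadd x y) z = Cadd (hinner x z) (hinner y z);
  hinner_scall : forall a x y, hinner (hscal a x) y = Cmul a (hinner x y);
  hinner_conj : forall x y, hinner x y = Cconj (hinner y x);
  hinner_pos : forall x, 0 <= re (hinner x x);
  hinner_def : forall x, hinner x x = C0 -> x = hzero;
  hcomplete : forall u : nat -> carrier,
    (forall eps, eps > 0 -> exists N, forall n m, (n >= N)%nat -> (m >= N)%nat ->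
        sqrt (re (hinner (hadd (u n) (hopp (u m))) (hadd (u n) (hopp (u m))))) < eps) ->
    exists l, forall eps, eps > 0 -> exists N, forall n, (n >= N)%nat ->
        sqrt (re (hinner (hadd (u n) (hopp l)) (hadd (u n) (hopp l)))) < eps
}.

Arguments hzero {h}.
Arguments hadd {h}.
Arguments hopp {h}.
Arguments hscal {h}.
Arguments hinner {h}.

Section Ops.
Context {H : HilbertSpace}.

Definition hsub (x y : H) : H := hadd x (hopp y).
Definition hnorm (x : H) : R := sqrt (re (hinner x x)).

Definition hconv (u : nat -> H) (l : H) : Prop :=
  Un_cv (fun n => hnorm (hsub (u n) l)) 0.

(** (Possibly unbounded) operators are represented by their graphs. *)
Definition graph := H -> H -> Prop.

Definition dom (G : graph) (x : H) : Prop := exists y, G x y.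

Definition is_operator (G : graph) : Prop :=
  G hzero hzero /\
  (forall x w y z, G x w -> G y z -> G (hadd x y) (hadd w z)) /\
  (forall a x w, G x w -> G (hscal a x) (hscal a w)) /\
  (forall x y1 y2, G x y1 -> G x y2 -> y1 = y2).

Definition densely_defined (G : graph) : Prop :=
  forall x : H, exists u : nat -> H, (forall n, dom G (u n)) /\ hconv u x.

Definition symmetric_op (G : graph) : Prop :=
  is_operator G /\ densely_defined G /\
  forall x w y z, G x w -> G y z -> hinner w y = hinner x z.

Definition adjoint (G : graph) : graph :=
  fun y z => forall x w, G x w -> hinner w y = hinner x z.

Definition closure (G : graph) : graph :=
  fun x y => exists (u v : nat -> H),
    (forall n, G (u n) (v n)) /\ hconv u x /\ hconv v y.

Definition self_adjoint (G : graph) : Prop :=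
  is_operator G /\ densely_defined G /\ forall y z, G y z <-> adjoint G y z.

Definition essentially_self_adjoint (G : graph) : Prop :=
  self_adjoint (closure G).

Definition bounded_selfadjoint (phi : H -> H) : Prop :=
  (forall x y, phi (hadd x y) = hadd (phi x) (phi y)) /\
  (forall a x, phi (hscal a x) = hscal a (phi x)) /\
  (exists c, forall x, hnorm (phi x) <= c * hnorm x) /\
  (forall x y, hinner (phi x) y = hinner x (phi y)).

Definition seq_approx_identity (phi : nat -> H -> H) : Prop :=
  (forall k, bounded_selfadjoint (phi k)) /\
  (forall x, hconv (fun k => phi k x) x).

(** Adequate approximate identity for D (graph G).  The commutator
    [Dbar, phi_k] on Dom D sends x (with D x = w) to Dbar(phi_k x) - phi_k w. *)
Definition adequate_approx_identity (G : graph) (phi : nat -> H -> H) : Prop :=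
  seq_approx_identity phi /\
  (forall k y, dom (adjoint G) y -> dom (closure G) (phi k y)) /\
  (forall k, exists Ck, forall x w v, G x w -> closure G (phi k x) v ->
       hnorm (hsub v (phi k w)) <= Ck * hnorm x) /\
  (exists M, forall k x w v, G x w -> closure G (phi k x) v ->
       hnorm (hsub v (phi k w)) <= M * hnorm x).

End Ops.

(* Only graph(D^* ) ⊆ graph(Dbar) needs work.  For (y, z) in the graph of D^*,
   each phi_k y lies in Dom Dbar, and testing Dbar(phi_k y) against Dom D shows,
   through the uniform commutator bound, that these vectors are bounded in k.
   Approximating inside the graph of D yields (p_k, q_k) with p_k -> y in norm and
   q_k bounded, and then q_k -> z weakly. *)

From Stdlib Require Import Reals Lra Psatz ClassicalEpsilon Lia.
Open Scope R_scope.

Lemma Cpx_eq (a b : Cpx) : re a = re b -> im a = im b -> a = b.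
Proof. destruct a, b; simpl; intros; subst; reflexivity. Qed.

Definition rc (r : R) : Cpx := mkC r 0.

Section VectorSpace.
Context {H : HilbertSpace}.
Implicit Types x y z : H.

Lemma hadd_0l x : hadd hzero x = x.
Proof. rewrite hadd_comm; apply hadd_0. Qed.

Lemma hadd_cancel_r x y z : hadd x z = hadd y z -> x = y.
Proof.
  intro E.
  assert (E2 : hadd (hadd x z) (hopp z) = hadd (hadd y z) (hopp z)) by now rewrite E.
  now rewrite <- !hadd_assoc, hadd_opp, !hadd_0 in E2.
Qed.

Lemma hscal_0 x : hscal C0 x = hzero.
Proof.
  apply (hadd_cancel_r _ _ (hscal C0 x)). rewrite hadd_0l, <- hscal_addl.
  f_equal. apply Cpx_eq; simpl; ring.
Qed.

Lemma hopp_unique x y : hadd x y = hzero -> y = hopp x.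
Proof.
  intro E. apply (hadd_cancel_r _ _ x).
  now rewrite (hadd_comm _ (hopp x)), hadd_opp, hadd_comm.
Qed.

Lemma hscalN1 x : hscal (rc (-1)) x = hopp x.
Proof.
  apply hopp_unique. rewrite <- (hscal_1 _ x) at 1. rewrite <- hscal_addl, <- (hscal_0 x).
  f_equal. apply Cpx_eq; simpl; ring.
Qed.

Lemma hoppK x : hopp (hopp x) = x.
Proof. symmetry. apply hopp_unique. rewrite hadd_comm. apply hadd_opp. Qed.

Lemma hopp_add x y : hopp (hadd x y) = hadd (hopp x) (hopp y).
Proof. rewrite <- !hscalN1. apply hscal_addr. Qed.

Lemma hscal_opp a x : hscal a (hopp x) = hopp (hscal a x).
Proof. rewrite <- !hscalN1, <- !hscal_mul. f_equal. apply Cpx_eq; simpl; ring. Qed.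

Lemma hsub_add (a b c d : H) : hsub (hadd a b) (hadd c d) = hadd (hsub a c) (hsub b d).
Proof.
  unfold hsub. rewrite hopp_add, !hadd_assoc. f_equal.
  rewrite <- !hadd_assoc. f_equal. apply hadd_comm.
Qed.

Lemma hsub_scal a x y : hsub (hscal a x) (hscal a y) = hscal a (hsub x y).
Proof. unfold hsub. now rewrite hscal_addr, hscal_opp. Qed.

Lemma hsubxx x : hsub x x = hzero.
Proof. apply hadd_opp. Qed.

Lemma hsub0 x : hsub x hzero = x.
Proof. unfold hsub. rewrite <- (hopp_unique hzero hzero (hadd_0 _ _)). apply hadd_0. Qed.

Lemma hsub_eq0 x y : hsub x y = hzero -> x = y.
Proof. unfold hsub; intro E. apply hopp_unique in E. now rewrite <- (hoppK y), E, hoppK. Qed.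

Lemma hadd_hsub x y : hadd y (hsub x y) = x.
Proof.
  unfold hsub. rewrite (hadd_comm _ x), hadd_assoc, hadd_opp. apply hadd_0l.
Qed.

Lemma hsub_chain x y z : hadd (hsub x y) (hsub y z) = hsub x z.
Proof.
  unfold hsub. rewrite <- hadd_assoc, (hadd_assoc _ (hopp y)), (hadd_comm _ (hopp y) y).
  now rewrite hadd_opp, hadd_0l.
Qed.

Lemma hscal_rcM r s x : hscal (rc r) (hscal (rc s) x) = hscal (rc (r * s)) x.
Proof. rewrite <- hscal_mul. f_equal. apply Cpx_eq; simpl; ring. Qed.

Lemma hscal_rcD r s x : hscal (rc (r + s)) x = hadd (hscal (rc r) x) (hscal (rc s) x).
Proof. rewrite <- hscal_addl. f_equal. apply Cpx_eq; simpl; ring. Qed.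

End VectorSpace.

Section InnerProduct.
Context {H : HilbertSpace}.
Implicit Types x y z : H.

Lemma re_hinnerC x y : re (hinner x y) = re (hinner y x).
Proof. now rewrite (hinner_conj _ x y). Qed.

Lemma im_hinnerxx x : im (hinner x x) = 0.
Proof. pose proof (f_equal im (hinner_conj _ x x)). simpl in *. lra. Qed.

Lemma re_hinnerDl x y z : re (hinner (hadd x y) z) = re (hinner x z) + re (hinner y z).
Proof. now rewrite hinner_addl. Qed.

Lemma re_hinnerDr x y z : re (hinner z (hadd x y)) = re (hinner z x) + re (hinner z y).
Proof. rewrite !(re_hinnerC z). apply re_hinnerDl. Qed.

Lemma re_hinnerZl a x y :
  re (hinner (hscal a x) y) = re a * re (hinner x y) - im a * im (hinner x y).
Proof. now rewrite hinner_scall. Qed.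

Lemma re_hinnerBl x y z : re (hinner (hsub x y) z) = re (hinner x z) - re (hinner y z).
Proof. unfold hsub. rewrite re_hinnerDl, <- hscalN1, re_hinnerZl. simpl. ring. Qed.

Lemma re_hinnerBr x y z : re (hinner z (hsub x y)) = re (hinner z x) - re (hinner z y).
Proof. rewrite !(re_hinnerC z). apply re_hinnerBl. Qed.

Lemma im_hinner_re x y : im (hinner x y) = - re (hinner (hscal (mkC 0 1) x) y).
Proof. rewrite re_hinnerZl. simpl. ring. Qed.

Definition hnormsq x := re (hinner x x).

Lemma hnormsq_ge0 x : 0 <= hnormsq x.
Proof. apply hinner_pos. Qed.

Lemma hnorm_ge0 x : 0 <= hnorm x.
Proof. apply sqrt_pos. Qed.

Lemma hnorm_sq x : hnorm x * hnorm x = hnormsq x.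
Proof. apply sqrt_sqrt, hnormsq_ge0. Qed.

Lemma hnormsqD x y : hnormsq (hadd x y) = hnormsq x + hnormsq y + 2 * re (hinner x y).
Proof. unfold hnormsq. rewrite re_hinnerDl, !re_hinnerDr, (re_hinnerC y x). ring. Qed.

Lemma hnormsqZ a x : hnormsq (hscal a x) = (re a * re a + im a * im a) * hnormsq x.
Proof.
  unfold hnormsq. rewrite re_hinnerZl, (hinner_conj _ x (hscal a x)). simpl.
  rewrite hinner_scall. simpl. rewrite im_hinnerxx. ring.
Qed.

Lemma hnormsq_eq0 x : hnormsq x = 0 -> x = hzero.
Proof. intro E. apply hinner_def, Cpx_eq; [exact E | apply im_hinnerxx]. Qed.

Lemma hnormZ a x : hnorm (hscal a x) = sqrt (re a * re a + im a * im a) * hnorm x.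
Proof.
  unfold hnorm. fold (hnormsq (hscal a x)) (hnormsq x).
  rewrite hnormsqZ, sqrt_mult; [reflexivity | nra | apply hnormsq_ge0].
Qed.

Lemma hnorm0 : hnorm (@hzero H) = 0.
Proof.
  rewrite <- (hscal_0 hzero), hnormZ. simpl.
  replace (0 * 0 + 0 * 0) with 0 by ring. rewrite sqrt_0. ring.
Qed.

Lemma hnorm_opp x : hnorm (hopp x) = hnorm x.
Proof.
  rewrite <- hscalN1, hnormZ. simpl.
  replace (-1 * -1 + 0 * 0) with 1 by ring. rewrite sqrt_1. ring.
Qed.

Lemma hnorm_subC x y : hnorm (hsub x y) = hnorm (hsub y x).
Proof.
  rewrite <- hnorm_opp. f_equal. unfold hsub.
  now rewrite hopp_add, hoppK, hadd_comm.
Qed.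

Lemma hnorm_eq0 x : hnorm x = 0 -> x = hzero.
Proof. intro E. apply hnormsq_eq0. rewrite <- hnorm_sq, E. ring. Qed.

Lemma Cauchy_Schwarz_sq x y : re (hinner x y) * re (hinner x y) <= hnormsq x * hnormsq y.
Proof.
  assert (Q : forall t, 0 <= hnormsq x + 2 * t * re (hinner x y) + t * t * hnormsq y).
  { intro t. pose proof (hnormsq_ge0 (hadd x (hscal (rc t) y))) as P.
    rewrite hnormsqD, hnormsqZ, (re_hinnerC x), re_hinnerZl, (re_hinnerC y x) in P.
    simpl in P. lra. }
  pose proof (hnormsq_ge0 x). pose proof (hnormsq_ge0 y).
  set (a := hnormsq y) in *. set (b := re (hinner x y)) in *. set (c := hnormsq x) in *.
  destruct (Req_dec a 0) as [A | A].
  - destruct (Req_dec b 0) as [B | B]; [rewrite B, A; lra|].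
    specialize (Q (- (c + 1) / (2 * b))). rewrite A in Q.
    replace (2 * (- (c + 1) / (2 * b)) * b) with (- (c + 1)) in Q by (field; exact B).
    lra.
  - specialize (Q (- b / a)).
    replace (c + 2 * (- b / a) * b + - b / a * (- b / a) * a)
      with ((c * a - b * b) / a) in Q by (field; lra).
    apply Rmult_le_compat_r with (r := a) in Q; [|lra].
    unfold Rdiv in Q. rewrite Rmult_assoc, Rinv_l in Q; lra.
Qed.

Lemma Cauchy_Schwarz x y : Rabs (re (hinner x y)) <= hnorm x * hnorm y.
Proof.
  pose proof (Cauchy_Schwarz_sq x y) as CS. rewrite <- !hnorm_sq in CS.
  pose proof (hnorm_ge0 x). pose proof (hnorm_ge0 y).
  rewrite <- (Rabs_right (hnorm x * hnorm y)) by nra.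
  apply Rsqr_le_abs_0. unfold Rsqr. nra.
Qed.

Lemma hnorm_triangle x y : hnorm (hadd x y) <= hnorm x + hnorm y.
Proof.
  pose proof (Cauchy_Schwarz x y). pose proof (Rle_abs (re (hinner x y))).
  pose proof (hnorm_ge0 x). pose proof (hnorm_ge0 y).
  apply Rsqr_incr_0_var; [unfold Rsqr | nra].
  rewrite hnorm_sq, hnormsqD, <- !hnorm_sq. nra.
Qed.

Lemma hnorm_sub_triangle x y z : hnorm (hsub x z) <= hnorm (hsub x y) + hnorm (hsub y z).
Proof. rewrite <- (hsub_chain x y z). apply hnorm_triangle. Qed.

Lemma hnorm_sub_le x y : hnorm (hsub x y) <= hnorm x + hnorm y.
Proof. rewrite <- (hnorm_opp y). apply hnorm_triangle. Qed.

Lemma hnorm_le_sub x y : hnorm x <= hnorm y + hnorm (hsub x y).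
Proof. rewrite <- (hadd_hsub x y) at 1. apply hnorm_triangle. Qed.

End InnerProduct.

Lemma Un_cv_const (c : R) : Un_cv (fun _ => c) c.
Proof. intros eps E. exists O. intros. unfold R_dist. rewrite Rminus_diag, Rabs_R0. lra. Qed.

Lemma Un_cv_dist_le (u e : nat -> R) l :
  (forall n, Rabs (u n - l) <= e n) -> Un_cv e 0 -> Un_cv u l.
Proof.
  intros B Ce eps E. destruct (Ce eps E) as [N HN]. exists N. intros n Hn.
  specialize (HN n Hn). specialize (B n). unfold R_dist in *.
  rewrite Rminus_0_r in HN. pose proof (Rle_abs (e n)). lra.
Qed.

Lemma Un_cv_inv_INR_S : Un_cv (fun n => / INR (S n)) 0.
Proof.
  apply (cv_infty_cv_0 (fun n => INR (S n))). intro M.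
  destruct (INR_unbounded M) as [N HN]. exists N. intros n Hn.
  apply le_INR in Hn. rewrite S_INR. lra.
Qed.

Section Convergence.
Context {H : HilbertSpace}.
Implicit Types x y z : H.

Lemma hconv_iff (u : nat -> H) l : hconv u l <->
  forall eps, eps > 0 -> exists N, forall n, (n >= N)%nat -> hnorm (hsub (u n) l) < eps.
Proof.
  unfold hconv, Un_cv, R_dist.
  split; intros C eps E; destruct (C eps E) as [N HN]; exists N; intros n Hn;
    specialize (HN n Hn); pose proof (hnorm_ge0 (hsub (u n) l));
    rewrite Rminus_0_r, Rabs_right in * by lra; lra.
Qed.

Lemma hconv_le (u : nat -> H) l (e : nat -> R) :
  (forall n, hnorm (hsub (u n) l) <= e n) -> Un_cv e 0 -> hconv u l.
Proof.
  intros B. apply Un_cv_dist_le. intro n.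
  rewrite Rminus_0_r, Rabs_right by apply Rle_ge, hnorm_ge0. apply B.
Qed.

Lemma hconv_const x : hconv (fun _ => x) x.
Proof.
  apply (hconv_le _ _ (fun _ => 0)); [| apply Un_cv_const].
  intro. rewrite hsubxx, hnorm0. lra.
Qed.

Lemma hconv_add (u v : nat -> H) x y :
  hconv u x -> hconv v y -> hconv (fun n => hadd (u n) (v n)) (hadd x y).
Proof.
  intros Cu Cv. eapply hconv_le; [| rewrite <- (Rplus_0_r 0); exact (CV_plus _ _ _ _ Cu Cv)].
  intro n. simpl. rewrite hsub_add. apply hnorm_triangle.
Qed.

Lemma hconv_scal a (u : nat -> H) x : hconv u x -> hconv (fun n => hscal a (u n)) (hscal a x).
Proof.
  intro Cu. set (c := sqrt (re a * re a + im a * im a)).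
  eapply hconv_le; [| rewrite <- (Rmult_0_r c); exact (CV_mult _ _ _ _ (Un_cv_const c) Cu)].
  intro n. simpl. rewrite hsub_scal, hnormZ. apply Rle_refl.
Qed.

Lemma hconv_hnorm (u : nat -> H) x : hconv u x -> Un_cv (fun n => hnorm (u n)) (hnorm x).
Proof.
  intro Cu. apply (Un_cv_dist_le _ (fun n => hnorm (hsub (u n) x))); [intro n | exact Cu].
  pose proof (hnorm_le_sub (u n) x). pose proof (hnorm_le_sub x (u n)).
  rewrite (hnorm_subC x) in *. apply Rabs_le. lra.
Qed.

Lemma re_hinner_cv (u v : nat -> H) x y : hconv u x -> hconv v y ->
  Un_cv (fun n => re (hinner (u n) (v n))) (re (hinner x y)).
Proof.
  intros Cu Cv.
  apply (Un_cv_dist_le _ (fun n => hnorm (hsub (u n) x) * hnorm (v n) + hnorm x * hnorm (hsub (v n) y))).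
  - intro n.
    replace (re (hinner (u n) (v n)) - re (hinner x y))
      with (re (hinner (hsub (u n) x) (v n)) + re (hinner x (hsub (v n) y)))
      by (rewrite re_hinnerBl, re_hinnerBr; ring).
    eapply Rle_trans; [apply Rabs_triang|].
    apply Rplus_le_compat; apply Cauchy_Schwarz.
  - replace 0 with (0 * hnorm y + hnorm x * 0) by ring.
    apply CV_plus; apply CV_mult; [exact Cu | apply hconv_hnorm, Cv | apply Un_cv_const | exact Cv].
Qed.

Lemma hinner_limit_eq (a b c d : nat -> H) x y x' y' :
  hconv a x -> hconv b y -> hconv c x' -> hconv d y' ->
  (forall n, hinner (a n) (b n) = hinner (c n) (d n)) -> hinner x y = hinner x' y'.
Proof.
  intros Ca Cb Cc Cd E. apply Cpx_eq.
  - eapply UL_sequence; [apply (re_hinner_cv _ _ _ _ Ca Cb)|].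
    eapply Un_cv_ext; [| apply (re_hinner_cv _ _ _ _ Cc Cd)]. intro n. simpl. now rewrite E.
  - rewrite !im_hinner_re. f_equal. eapply UL_sequence.
    + apply (re_hinner_cv _ _ _ _ (hconv_scal (mkC 0 1) _ _ Ca) Cb).
    + eapply Un_cv_ext; [| apply (re_hinner_cv _ _ _ _ (hconv_scal (mkC 0 1) _ _ Cc) Cd)].
      intro n. simpl. now rewrite !hinner_scall, E.
Qed.

Lemma hconv_bounded (u : nat -> H) x : hconv u x -> exists B, forall n, hnorm (u n) <= B.
Proof.
  intro Cu. destruct (maj_by_pos _ (exist _ _ (hconv_hnorm _ _ Cu))) as [B [_ HB]].
  exists B. intro n. eapply Rle_trans; [apply Rle_abs | apply HB].
Qed.

Definition weakly_null (u : nat -> H) : Prop :=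
  forall h, Un_cv (fun k => re (hinner h (u k))) 0.

Lemma hconv_weakly_null (u : nat -> H) y : hconv u y -> weakly_null (fun k => hsub (u k) y).
Proof.
  intros Cu h. apply (Un_cv_dist_le _ (fun k => hnorm h * hnorm (hsub (u k) y))).
  - intro k. rewrite Rminus_0_r. apply Cauchy_Schwarz.
  - rewrite <- (Rmult_0_r (hnorm h)). exact (CV_mult _ _ _ _ (Un_cv_const _) Cu).
Qed.

End Convergence.

Section Density.
Context {H : HilbertSpace} (D : @graph H) (Ddense : densely_defined D).

Lemma hnorm_le_dense (v : H) K : 0 <= K ->
  (forall x, dom D x -> Rabs (re (hinner x v)) <= K * hnorm x) -> hnorm v <= K.
Proof.
  intros K0 HB. destruct (Ddense v) as [xs [Dx Cx]].
  assert (L : Rabs (hnormsq v) <= K * hnorm v).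
  { apply (Rle_cv_lim (fun n => HB (xs n) (Dx n))).
    - apply cv_cvabs, (re_hinner_cv _ _ _ _ Cx (hconv_const v)).
    - apply CV_mult; [apply Un_cv_const | apply hconv_hnorm, Cx]. }
  rewrite Rabs_right, <- hnorm_sq in L by apply Rle_ge, hnormsq_ge0.
  pose proof (hnorm_ge0 v). destruct (Req_dec (hnorm v) 0); nra.
Qed.

Lemma weakly_null_dense (a : nat -> H) B : (forall k, hnorm (a k) <= B) ->
  (forall x, dom D x -> Un_cv (fun k => re (hinner x (a k))) 0) -> weakly_null a.
Proof.
  intros HB W h eps E.
  assert (B0 : 0 <= B) by (pose proof (HB O); pose proof (hnorm_ge0 (a O)); lra).
  destruct (Ddense h) as [xs [Dx Cx]]. rewrite hconv_iff in Cx.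
  destruct (Cx (eps / 2 / (B + 1))) as [N HN]; [apply Rdiv_lt_0_compat; lra|].
  specialize (HN N (le_n _)).
  destruct (W (xs N) (Dx N) (eps / 2)) as [M HM]; [lra|].
  exists M. intros k Hk. specialize (HM k Hk). unfold R_dist in *. rewrite Rminus_0_r in *.
  replace (re (hinner h (a k)))
    with (re (hinner (xs N) (a k)) - re (hinner (hsub (xs N) h) (a k)))
    by (rewrite re_hinnerBl; ring).
  eapply Rle_lt_trans; [apply Rabs_triang|]. rewrite Rabs_Ropp.
  pose proof (Cauchy_Schwarz (hsub (xs N) h) (a k)). specialize (HB k).
  pose proof (hnorm_ge0 (hsub (xs N) h)). pose proof (hnorm_ge0 (a k)).
  assert (hnorm (hsub (xs N) h) * (B + 1) < eps / 2).
  { apply Rmult_lt_compat_r with (r := B + 1) in HN; [|lra].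
    now replace (eps / 2 / (B + 1) * (B + 1)) with (eps / 2) in HN by (field; lra). }
  nra.
Qed.

End Density.

Section CesaroMeans.
Context {H : HilbertSpace}.
Implicit Types (u c : nat -> H) (y : H).

Fixpoint hsum u (n : nat) : H :=
  match n with
  | O => hzero
  | S n => hadd (hsum u n) (u n)
  end.

Definition cesaro u (n : nat) : H := hscal (rc (/ INR (S n))) (hsum u (S n)).

Lemma hsum_sub_const u y n :
  hsum (fun i => hsub (u i) y) n = hsub (hsum u n) (hscal (rc (INR n)) y).
Proof.
  induction n as [|n IH]; cbn [hsum].
  - change (rc 0) with C0. now rewrite hscal_0, hsubxx.
  - rewrite IH, <- hsub_add. f_equal.
    rewrite S_INR, hscal_rcD. f_equal. symmetry. apply hscal_1.
Qed.

Lemma cesaro_sub_const u y n : cesaro (fun i => hsub (u i) y) n = hsub (cesaro u n) y.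
Proof.
  unfold cesaro. rewrite hsum_sub_const, <- hsub_scal, hscal_rcM, Rinv_l.
  - f_equal. apply hscal_1.
  - apply not_0_INR. discriminate.
Qed.

Lemma cesaro_sub_null u y : hconv (cesaro (fun n => hsub (u n) y)) hzero -> hconv (cesaro u) y.
Proof.
  intro C. eapply Un_cv_ext; [| exact C]. intro n. simpl. now rewrite hsub0, cesaro_sub_const.
Qed.

Lemma hnormsq_hsum_le c B : (forall n, hnorm (c n) <= B) ->
  (forall n, Rabs (re (hinner (hsum c n) (c n))) <= 1) ->
  forall n, hnormsq (hsum c n) <= INR n * (B * B + 2).
Proof.
  intros HB HI n. induction n as [|n IH]; cbn [hsum].
  - rewrite <- hnorm_sq, hnorm0. simpl. lra.
  - rewrite hnormsqD, S_INR, <- (hnorm_sq (c n)).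
    pose proof (HB n). pose proof (hnorm_ge0 (c n)).
    pose proof (Rle_abs (re (hinner (hsum c n) (c n)))). specialize (HI n).
    nra.
Qed.

Lemma cesaro_null c C : 0 <= C ->
  (forall n, hnormsq (hsum c n) <= INR n * C) -> hconv (cesaro c) hzero.
Proof.
  intros C0 HB. apply hconv_iff. intros eps E.
  destruct (Un_cv_inv_INR_S (eps * eps / (C + 1))) as [N HN].
  { apply Rdiv_lt_0_compat; nra. }
  exists N. intros n Hn. specialize (HN n Hn). unfold R_dist in HN.
  rewrite Rminus_0_r, Rabs_right in HN by (apply Rle_ge, Rlt_le, Rinv_0_lt_compat, lt_0_INR; lia).
  rewrite hsub0. unfold cesaro.
  set (m := INR (S n)) in *. assert (mp : 0 < m) by (apply lt_0_INR; lia).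
  specialize (HB (S n)). fold m in HB.
  assert (L : hnormsq (hscal (rc (/ m)) (hsum c (S n))) < eps * eps).
  { rewrite hnormsqZ. unfold rc; cbn [re im]. replace (/ m * / m + 0 * 0) with (/ m * / m) by ring.
    assert (I : 0 < / m) by (apply Rinv_0_lt_compat; lra).
    assert (/ m * / m * hnormsq (hsum c (S n)) <= / m * C).
    { replace (/ m * C) with (/ m * / m * (m * C)) by (field; lra).
      apply Rmult_le_compat_l; nra. }
    assert (/ m * (C + 1) < eps * eps).
    { apply Rmult_lt_compat_r with (r := C + 1) in HN; [|lra].
      now replace (eps * eps / (C + 1) * (C + 1)) with (eps * eps) in HN by (field; lra). }
    nra. }
  rewrite <- hnorm_sq in L. pose proof (hnorm_ge0 (hscal (rc (/ m)) (hsum c (S n)))). nra.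
Qed.

Lemma is_operator_hsum (D : @graph H) p q : is_operator D ->
  (forall i, D (p i) (q i)) -> forall n, D (hsum p n) (hsum q n).
Proof.
  intros [D0 [Dadd _]] Dpq n. induction n as [|n IH]; simpl; [exact D0 | now apply Dadd].
Qed.

Lemma is_operator_cesaro (D : @graph H) p q : is_operator D ->
  (forall i, D (p i) (q i)) -> forall n, D (cesaro p n) (cesaro q n).
Proof.
  intros Dop Dpq n. destruct Dop as (D0 & Dadd & Dscal & Dfun).
  apply Dscal, is_operator_hsum; [repeat split | ]; assumption.
Qed.

End CesaroMeans.

Section GreedySelection.
Context {H : HilbertSpace} (a b : nat -> H) (pick : H * H -> nat).

Fixpoint greedy_sums (n : nat) : H * H :=
  match n with
  | O => (hzero, hzero)
  | S n => let s := greedy_sums n in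
           (hadd (fst s) (a (pick s)), hadd (snd s) (b (pick s)))
  end.

Definition greedy_index (n : nat) : nat := pick (greedy_sums n).

Lemma greedy_sums_hsum n : greedy_sums n =
  (hsum (fun i => a (greedy_index i)) n, hsum (fun i => b (greedy_index i)) n).
Proof.
  induction n as [|n IH]; [reflexivity|].
  change (greedy_sums (S n)) with
    (hadd (fst (greedy_sums n)) (a (greedy_index n)),
     hadd (snd (greedy_sums n)) (b (greedy_index n))).
  now rewrite IH.
Qed.

End GreedySelection.

(* Banach-Saks: picking each index so that the new terms are almost orthogonal
   to the running sums keeps those sums of size O(sqrt n). *)
Lemma weakly_null_cesaro_select {H : HilbertSpace} (a b : nat -> H) Ba Bb :
  (forall k, hnorm (a k) <= Ba) -> (forall k, hnorm (b k) <= Bb) ->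
  weakly_null a -> weakly_null b ->
  exists s : nat -> nat,
    hconv (cesaro (fun n => a (s n))) hzero /\ hconv (cesaro (fun n => b (s n))) hzero.
Proof.
  intros HBa HBb Wa Wb.
  assert (Pick : forall st : H * H, exists k,
    Rabs (re (hinner (fst st) (a k))) <= 1 /\ Rabs (re (hinner (snd st) (b k))) <= 1).
  { intros [sa sb]. destruct (Wa sa 1) as [N1 H1]; [lra|]. destruct (Wb sb 1) as [N2 H2]; [lra|].
    exists (max N1 N2). specialize (H1 (max N1 N2) ltac:(lia)).
    specialize (H2 (max N1 N2) ltac:(lia)). unfold R_dist in *. rewrite Rminus_0_r in *.
    simpl. lra. }
  destruct (choice _ Pick) as [pick Hpick].
  exists (greedy_index a b pick). split.
  - apply (cesaro_null _ (Ba * Ba + 2)); [nra|].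
    apply hnormsq_hsum_le; [intro; apply HBa|]. intro n.
    replace (hsum _ n) with (fst (greedy_sums a b pick n)) by now rewrite greedy_sums_hsum.
    apply Hpick.
  - apply (cesaro_null _ (Bb * Bb + 2)); [nra|].
    apply hnormsq_hsum_le; [intro; apply HBb|]. intro n.
    replace (hsum _ n) with (snd (greedy_sums a b pick n)) by now rewrite greedy_sums_hsum.
    apply Hpick.
Qed.

Section Closure.
Context {H : HilbertSpace} (D : @graph H).

Lemma closure_incl x w : D x w -> closure D x w.
Proof. intro E. exists (fun _ => x), (fun _ => w). auto using hconv_const. Qed.

Lemma adjoint_closure y z : adjoint D y z -> adjoint (closure D) y z.
Proof.
  intros A a b (u & v & Duv & Cu & Cv).
  apply (hinner_limit_eq v (fun _ => y) u (fun _ => z)); auto using hconv_const.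
Qed.

Lemma closure_near x v eps : closure D x v -> eps > 0 ->
  exists p q, D p q /\ hnorm (hsub p x) < eps /\ hnorm (hsub q v) < eps.
Proof.
  intros (u & w & Duw & Cu & Cw) E. rewrite hconv_iff in Cu, Cw.
  destruct (Cu eps E) as [N1 H1]. destruct (Cw eps E) as [N2 H2].
  exists (u (max N1 N2)), (w (max N1 N2)). split; [apply Duw|]. split.
  - apply H1. lia.
  - apply H2. lia.
Qed.

Lemma closure_densely_defined : densely_defined D -> densely_defined (closure D).
Proof.
  intros Dd x. destruct (Dd x) as [u [Du Cu]]. exists u. split; [|exact Cu].
  intro n. destruct (Du n) as [w Dw]. exists w. now apply closure_incl.
Qed.

Lemma graph_approximation (xs : nat -> H) y K : hconv xs y ->
  (forall k, exists v, closure D (xs k) v /\ hnorm v <= K) ->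
  exists p q : nat -> H,
    (forall k, D (p k) (q k)) /\ hconv p y /\ forall k, hnorm (q k) <= K + 1.
Proof.
  intros Cx Hv.
  assert (Pk : forall k, exists pq : H * H, D (fst pq) (snd pq) /\
    hnorm (hsub (fst pq) (xs k)) < / INR (S k) /\ hnorm (snd pq) <= K + 1).
  { intro k. destruct (Hv k) as [v [Cv Bv]].
    assert (E : Rmin 1 (/ INR (S k)) > 0).
    { apply Rmin_glb_lt; [lra | apply Rinv_0_lt_compat, lt_0_INR; lia]. }
    destruct (closure_near _ _ _ Cv E) as (p & q & Dpq & Hp & Hq).
    pose proof (Rmin_l 1 (/ INR (S k))). pose proof (Rmin_r 1 (/ INR (S k))).
    pose proof (hnorm_le_sub q v).
    exists (p, q). cbn [fst snd]. repeat split; [exact Dpq | lra | lra]. }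
  destruct (choice _ Pk) as [pq Hpq].
  exists (fun k => fst (pq k)), (fun k => snd (pq k)).
  split; [intro k; apply Hpq|]. split; [|intro k; apply Hpq].
  apply (hconv_le _ _ (fun k => / INR (S k) + hnorm (hsub (xs k) y))).
  - intro k. pose proof (hnorm_sub_triangle (fst (pq k)) (xs k) y).
    destruct (Hpq k) as (_ & Hp & _). lra.
  - rewrite <- (Rplus_0_r 0). exact (CV_plus _ _ _ _ Un_cv_inv_INR_S Cx).
Qed.

Section Symmetric.
Hypothesis Dsym : symmetric_op D.

Lemma symmetric_sub_adjoint x w : D x w -> adjoint D x w.
Proof. destruct Dsym as (_ & _ & S). intros Dxw x' w' D'. exact (S x' w' x w D' Dxw). Qed.

Lemma closure_sub_adjoint y z : closure D y z -> adjoint D y z.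
Proof.
  intros Cl x w Dxw. rewrite (hinner_conj _ w y), (hinner_conj _ x z).
  f_equal. symmetry. exact (adjoint_closure x w (symmetric_sub_adjoint x w Dxw) y z Cl).
Qed.

Lemma closure_is_operator : is_operator (closure D).
Proof.
  pose proof Dsym as [(D0 & Dadd & Dscal & _) [Ddense _]].
  split; [|split; [|split]].
  - now apply closure_incl.
  - intros x w y z (u1 & v1 & D1 & C1 & C1') (u2 & v2 & D2 & C2 & C2').
    exists (fun n => hadd (u1 n) (u2 n)), (fun n => hadd (v1 n) (v2 n)).
    split; [intro; now apply Dadd | split; now apply hconv_add].
  - intros a x w (u & v & Duv & Cu & Cv).
    exists (fun n => hscal a (u n)), (fun n => hscal a (v n)).
    split; [intro; now apply Dscal | split; now apply hconv_scal].
  - intros x y1 y2 E1 E2. apply hsub_eq0, hnorm_eq0, Rle_antisym; [| apply hnorm_ge0].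
    apply (hnorm_le_dense D Ddense); [lra|]. intros x' [w' Dxw'].
    assert (E : forall y, closure D x y -> re (hinner x' y) = re (hinner x w')).
    { intros y Cy. rewrite re_hinnerC.
      now rewrite (adjoint_closure _ _ (symmetric_sub_adjoint _ _ Dxw') _ _ Cy). }
    rewrite re_hinnerBr, (E y1 E1), (E y2 E2), Rminus_diag, Rabs_R0. lra.
Qed.

(* For x in Dom D, <x, q_k> = <p_k, D x> -> <y, D x> = <x, z>; density and
   boundedness extend this to all test vectors. *)
Lemma weakly_null_graph y z (p q : nat -> H) B : adjoint D y z ->
  (forall k, D (p k) (q k)) -> hconv p y -> (forall k, hnorm (q k) <= B) ->
  weakly_null (fun k => hsub (q k) z).
Proof.
  intros Ayz Dpq Cp Bq. pose proof Dsym as (_ & Ddense & S).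
  apply (weakly_null_dense D Ddense _ (B + hnorm z)).
  - intro k. pose proof (hnorm_sub_le (q k) z). specialize (Bq k). lra.
  - intros x [w Dxw]. eapply Un_cv_ext; [| exact (hconv_weakly_null p y Cp w)].
    intro k. cbn beta. rewrite !re_hinnerBr, (re_hinnerC x (q k)).
    now rewrite (S _ _ _ _ (Dpq k) Dxw), <- (Ayz x w Dxw), (re_hinnerC (p k)).
Qed.

Section Adequate.
Variable phi : nat -> H -> H.
Hypothesis Dadeq : adequate_approx_identity D phi.

(* For x in Dom D, <x, Dbar (phi_k y)> = <x, phi_k z> - <[Dbar, phi_k] x, y>,
   which the uniform commutator bound controls by a multiple of |x|. *)
Lemma closure_phi_bounded y z : adjoint D y z ->
  exists K, forall k, exists v, closure D (phi k y) v /\ hnorm v <= K.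
Proof.
  intros Ayz. destruct Dadeq as [[Hsa Hconv] [Hdom [_ [M HM]]]].
  pose proof Dsym as (_ & Ddense & _).
  destruct (hconv_bounded _ _ (Hconv z)) as [Bz HBz].
  exists (Rabs Bz + Rabs M * hnorm y). intro k.
  destruct (Hdom k y (ex_intro _ z Ayz)) as [v Cv]. exists v. split; [exact Cv|].
  apply (hnorm_le_dense D Ddense).
  { pose proof (Rabs_pos Bz). pose proof (Rabs_pos M). pose proof (hnorm_ge0 y). nra. }
  intros x [w Dxw].
  pose proof (symmetric_sub_adjoint _ _ Dxw) as Axw.
  destruct (Hdom k x (ex_intro _ w Axw)) as [v' Cv'].
  specialize (HM k x w v' Dxw Cv').
  destruct (Hsa k) as (_ & _ & _ & SA).
  assert (Eq : re (hinner x v) = re (hinner x (phi k z)) - re (hinner (hsub v' (phi k w)) y)).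
  { rewrite re_hinnerBl, (re_hinnerC x v), (adjoint_closure _ _ Axw _ _ Cv).
    rewrite (adjoint_closure _ _ Ayz _ _ Cv'), SA, SA, (re_hinnerC y). ring. }
  rewrite Eq. eapply Rle_trans; [apply Rabs_triang|]. rewrite Rabs_Ropp.
  pose proof (Cauchy_Schwarz x (phi k z)). pose proof (Cauchy_Schwarz (hsub v' (phi k w)) y).
  specialize (HBz k). pose proof (hnorm_ge0 x). pose proof (hnorm_ge0 y).
  pose proof (hnorm_ge0 (phi k z)). pose proof (Rle_abs Bz). pose proof (Rle_abs M).
  assert (hnorm (hsub v' (phi k w)) <= Rabs M * hnorm x) by nra.
  nra.
Qed.

Lemma adjoint_sub_closure y z : adjoint D y z -> closure D y z.
Proof.
  intros Ayz. pose proof Dsym as [Dop _].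
  destruct Dadeq as [[_ Hconv] _].
  destruct (closure_phi_bounded y z Ayz) as [K HK].
  destruct (graph_approximation _ _ _ (Hconv y) HK) as (p & q & Dpq & Cp & Bq).
  destruct (hconv_bounded _ _ Cp) as [Bp HBp].
  assert (Bpy : forall k, hnorm (hsub (p k) y) <= Bp + hnorm y).
  { intro k. pose proof (hnorm_sub_le (p k) y). specialize (HBp k). lra. }
  assert (Bqz : forall k, hnorm (hsub (q k) z) <= K + 1 + hnorm z).
  { intro k. pose proof (hnorm_sub_le (q k) z). specialize (Bq k). lra. }
  destruct (weakly_null_cesaro_select _ _ _ _ Bpy Bqz (hconv_weakly_null _ _ Cp)
              (weakly_null_graph y z p q _ Ayz Dpq Cp Bq)) as (s & Cps & Cqs).
  exists (cesaro (fun n => p (s n))), (cesaro (fun n => q (s n))).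
  split; [now apply is_operator_cesaro|].
  split; now apply cesaro_sub_null.
Qed.

End Adequate.
End Symmetric.
End Closure.

Theorem mainTheorem2 (H : HilbertSpace) (D : @graph H) :
  symmetric_op D ->
  (exists phi : nat -> H -> H, adequate_approx_identity D phi) ->
  essentially_self_adjoint D.
Proof.
  intros Dsym [phi Dadeq].
  split; [now apply closure_is_operator|].
  split; [apply closure_densely_defined, Dsym|].
  intros y z. split.
  - intro Cyz. now apply adjoint_closure, closure_sub_adjoint.
  - intro Ayz. apply (adjoint_sub_closure D Dsym phi Dadeq).
    intros x w Dxw. now apply Ayz, closure_incl.
Qed.
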